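(* Let $n\ge 4$, $Q=\{0,1,\dots,n-1\}$, and let $\mathcal{W}_n=(Q,\{a,b,c,d,e\},\delta,0,\{1\})$ be the DFA whose letters induce the following transformations of $Q$: $a$: $0\mapsto n-1$, $i\mapsto i+1$ for $1\le i\le n-3$, $n-2\mapsto 1$, $n-1\mapsto n-1$; $b$: $0\mapsto n-1$, $1\mapsto 2$, $2\mapsto 1$, all other states fixed; $c$: $0\mapsto n-1$, $n-2\mapsto 1$, all other states fixed; $d$: $0\mapsto n-1$, $1\mapsto n-1$, all other states fixed; $e$: $0\mapsto 1$, every state $q\neq 0$ mapped to $n-1$. Then $\mathcal{W}_n$ is minimal, the language it accepts is suffix-free, and its transition semigroup equals $\mathbf{W}_{\mathrm{sf}}(n)$, which has cardinality $(n-1)^{n-2}+n-2$. In particular, $\mathbf{W}_{\mathrm{sf}}(n)$ contains (a) all $(n-1)^{n-2}$ transformations of $Q$ that send $0$ and $n-1$ to $n-1$ and map $\{1,\dots,n-2\}$ into $Q\setminus\{0\}$, and (b) all $n-2$ transformations that send $0$ to a state in $\{1,\dots,n-2\}$ and map all other states to $n-1$.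
   Context: Transformations act on the right: $qt$ is the image of $q$ under $t$, and $st$ denotes applying $s$ first, then $t$. The transition semigroup of a DFA is the semigroup of transformations of its state set generated by the transformations induced by its letters. A language $L$ is suffix-free if whenever $w\in L$ and $u\in L$ with $u$ a suffix of $w$, then $u=w$. Define $\mathbf{B}_{\mathrm{sf}}(n)=\{t:Q\to Q \mid 0\notin Qt,\ (n-1)t=n-1,\ \text{and for all } j\ge1:\ 0t^j=n-1 \text{ or } 0t^j\neq qt^j \text{ for all } q \text{ with } 0<q<n-1\}$, and $\mathbf{W}_{\mathrm{sf}}(n)=\{t\in\mathbf{B}_{\mathrm{sf}}(n)\mid 0t=n-1 \text{ or } qt=n-1 \text{ for all } q \text{ with } 1\le q\le n-2\}$. *)

From HB Require Import structures.
From mathcomp Require Import all_boot.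
Set Implicit Arguments. Unset Strict Implicit. Unset Printing Implicit Defensive.

Definition dstar (Q A : Type) (delta : Q -> A -> Q) (q : Q) (w : seq A) : Q :=
  foldl delta q w.

Definition accepts (Q A : Type) (delta : Q -> A -> Q) (q0 : Q) (F : pred Q)
  (w : seq A) : bool := F (dstar delta q0 w).

Definition minimal_dfa (Q : finType) (A : Type) (delta : Q -> A -> Q) (q0 : Q)
  (F : pred Q) : Prop :=
  forall (Q' : finType) (delta' : Q' -> A -> Q') (q0' : Q') (F' : pred Q'),
    (forall w, accepts delta' q0' F' w = accepts delta q0 F w) -> #|Q| <= #|Q'|.

Definition suffix_free (A : eqType) (L : seq A -> bool) : Prop :=
  forall w u, L w -> L u -> suffix u w -> u = w.

(* Membership in the transition semigroup: t is induced by some non-empty word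
   (right action: q t = t q; the word x1...xk induces "x1 then ... then xk"). *)
Definition in_trans_semigroup (Q : finType) (A : Type) (delta : Q -> A -> Q)
  (t : {ffun Q -> Q}) : Prop :=
  exists w : seq A, w <> [::] /\ forall q, t q = dstar delta q w.

Definition Bsf (n : nat) (t : {ffun 'I_n -> 'I_n}) : Prop :=
  (forall q : 'I_n, val (t q) <> 0)
  /\ (forall q : 'I_n, val q = n.-1 -> val (t q) = n.-1)
  /\ (forall j : nat, 1 <= j -> forall p : 'I_n, val p = 0 ->
        val (iter j t p) = n.-1
        \/ (forall q : 'I_n, 0 < val q < n.-1 -> iter j t p <> iter j t q)).

Definition Wsf (n : nat) (t : {ffun 'I_n -> 'I_n}) : Prop :=
  Bsf t /\
  ((forall p : 'I_n, val p = 0 -> val (t p) = n.-1)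
   \/ (forall q : 'I_n, 1 <= val q <= n - 2 -> val (t q) = n.-1)).

Inductive letter := La | Lb | Lc | Ld | Le.

Definition letter_eqb (x y : letter) : bool :=
  match x, y with
  | La, La | Lb, Lb | Lc, Lc | Ld, Ld | Le, Le => true
  | _, _ => false
  end.

Lemma letter_eqP : Equality.axiom letter_eqb.
Proof. by case; case; constructor. Qed.

HB.instance Definition _ := hasDecEq.Build letter letter_eqP.

(* transformation given by a nat-valued rule (the rules below always land in
   {0,...,n-1}; insubd is only a typing device) *)
Definition natmap (n : nat) (f : nat -> nat) : {ffun 'I_n -> 'I_n} :=
  [ffun q : 'I_n => insubd q (f (val q))].

Definition W_letter (n : nat) (x : letter) : {ffun 'I_n -> 'I_n} :=
  match x with
  | La => natmap n (fun i => if i == 0 then n.-1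
                            else if (1 <= i <= n - 3) then i.+1
                            else if i == n - 2 then 1
                            else i)
  | Lb => natmap n (fun i => if i == 0 then n.-1
                            else if i == 1 then 2
                            else if i == 2 then 1
                            else i)
  | Lc => natmap n (fun i => if i == 0 then n.-1
                            else if i == n - 2 then 1
                            else i)
  | Ld => natmap n (fun i => if i == 0 then n.-1
                            else if i == 1 then n.-1
                            else i)
  | Le => natmap n (fun i => if i == 0 then 1 else n.-1)
  end.

Definition W_delta (n : nat) (q : 'I_n) (x : letter) : 'I_n := W_letter n x q.

Definition W_final (n : nat) : pred 'I_n := fun q => val q == 1.

From HB Require Import structures.
From mathcomp Require Import all_boot zify.
Set Implicit Arguments. Unset Strict Implicit. Unset Printing Implicit Defensive.

(* Every letter acts by a transformation of one of two kinds: kind A sends 0 and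
   n-1 to n-1 and no state to 0; kind B sends 0 to an inner state 1..n-2 and
   every other state to n-1. Both kinds together are closed under composition
   and are exactly W_sf(n). Conversely a and b generate all permutations of the
   inner states, c conjugated by permutations merges any two inner states and d
   kills any inner state (sends it to n-1); so every map of kind A is obtained by
   killing, then merging, then permuting, and e followed by a transposition gives
   every map of kind B. The two kinds are families of finite functions with
   (n-1)^(n-2) and n-2 members.
   Every state is reachable, and every state other than the sink n-1 is the only
   one sent to the final state 1 by a suitable word, whence minimality. After a
   non-empty word the automaton is never in 0, while an accepted word is of kind
   B and so sends every nonzero state to n-1; hence suffix-freeness. *)

Ltac case_ifs :=
  repeat match goal with
  | |- context [if ?c then _ else _] =>
      lazymatch c with
      | context [if _ then _ else _] => fail
      | _ => let E := fresh "E" in destruct c eqn:E; simpl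
      end
  end.

Lemma dstar_cat (Q A : Type) (delta : Q -> A -> Q) q u v :
  dstar delta q (u ++ v) = dstar delta (dstar delta q u) v.
Proof. exact: foldl_cat. Qed.

Lemma count_lt_in (T : eqType) (a1 a2 : pred T) s x :
  {in s, forall y, a1 y -> a2 y} -> x \in s -> a2 x -> ~~ a1 x ->
  count a1 s < count a2 s.
Proof.
elim: s => //= y s IHs sub12; rewrite inE => /predU1P[<-|sx] a2x a1x.
  rewrite a2x (negbTE a1x) add0n add1n ltnS.
  rewrite (@eq_in_count _ a1 (predI a1 a2)) ?sub_count // => [z /andP[]//|z sz /=].
  by case a1z: (a1 z); rewrite // sub12 // inE sz orbT.
have lt12 : count a1 s < count a2 s.
  by apply: IHs => // z sz; apply: sub12; rewrite inE sz orbT.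
case a1y: (a1 y); last by rewrite add0n (leq_trans lt12) ?leq_addl.
by rewrite sub12 ?mem_head // !add1n ltnS.
Qed.

Lemma not_uniq_map (T1 T2 : eqType) (f : T1 -> T2) s :
  uniq s -> ~~ uniq (map f s) -> exists x y, [/\ x \in s, y \in s, x != y & f x = f y].
Proof.
case: s => [//|x0 s0]; set s := x0 :: s0 => s_uniq.
case/(uniqPn (f x0)) => i [j [lt_ij]]; rewrite size_map => lt_js.
have lt_is := ltn_trans lt_ij lt_js.
rewrite !(nth_map x0) // => eq_f.
exists (nth x0 s i), (nth x0 s j); rewrite !mem_nth //; split=> //.
by rewrite nth_uniq // ltn_eqF.
Qed.

Lemma iter_closed (T : Type) (h : T -> T) (P : T -> Prop) x i j :
  (forall y, P y -> P (h y)) -> P (iter i h x) -> i <= j -> P (iter j h x).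
Proof.
move=> hP Pi /subnKC <-; rewrite addnC iterD.
by elim: (j - i) => //= k IHk; apply: hP.
Qed.

Lemma card_ord_val n (A : {pred 'I_n}) (P : pred nat) :
  (forall y, (y \in A) = P (val y)) -> #|A| = count P (iota 0 n).
Proof.
move=> AP; rewrite cardE /enum_mem size_filter -enumT -val_enum_ord count_map.
exact: eq_count.
Qed.

Section TransitionSemigroup.
Variable n : nat.
Hypothesis n_ge4 : 4 <= n.
Local Notation N := n.-1.

Let n_gt0 : 0 < n. Proof. exact: leq_trans n_ge4. Qed.

Definition ordn (k : nat) : 'I_n := insubd (Ordinal n_gt0) k.

Lemma val_ordn k : k < n -> val (ordn k) = k.
Proof. by move=> lt_kn; rewrite /ordn insubdK. Qed.

Lemma ordn_val (q : 'I_n) : ordn (val q) = q.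
Proof. exact: valKd. Qed.

Definition letter_rule (x : letter) : nat -> nat :=
  match x with
  | La => fun i => if i == 0 then N else if 1 <= i <= n - 3 then i.+1
                   else if i == n - 2 then 1 else i
  | Lb => fun i => if i == 0 then N else if i == 1 then 2
                   else if i == 2 then 1 else i
  | Lc => fun i => if i == 0 then N else if i == n - 2 then 1 else i
  | Ld => fun i => if i == 0 then N else if i == 1 then N else i
  | Le => fun i => if i == 0 then 1 else N
  end.

Lemma val_W_delta (q : 'I_n) x : val (W_delta q x) = letter_rule x q.
Proof.
have lt_qn := ltn_ord q.
by case: x; rewrite /W_delta /= ffunE insubdK //; case_ifs; lia.
Qed.

(* Transformations of [{0,...,n-1}] are handled as functions on [nat]; only
   their values below [n] matter. *)
Definition realized (f : nat -> nat) : Prop :=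
  exists w : seq letter, w <> [::] /\
    forall q : 'I_n, val (dstar (@W_delta n) q w) = f q.

Lemma realized_eq_in f g :
  realized f -> (forall q, q < n -> f q = g q) -> realized g.
Proof. by move=> [w [w_ne Ew]] Efg; exists w; split=> // q; rewrite Ew Efg. Qed.

Lemma realized_comp f g : realized f -> realized g -> realized (g \o f).
Proof.
move=> [u [u_ne Eu]] [v [_ Ev]]; exists (u ++ v); split; first by case: u u_ne Eu.
by move=> q; rewrite dstar_cat Ev Eu.
Qed.

Lemma realized_letter x : realized (letter_rule x).
Proof. by exists [:: x]; split=> // q; rewrite val_W_delta. Qed.

Definition id_rule q := if q == 0 then N else q.
Definition rot_rule k q :=
  if q == 0 then N else if q == N then N
  else if q + k <= n - 2 then q + k else q + k - (n - 2).
Definition swap_rule i j q :=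
  if q == 0 then N else if q == i then j else if q == j then i else q.
Definition merge_rule i j q := if q == 0 then N else if q == i then j else q.

Ltac rule_arith :=
  move=> q lt_qn; rewrite /= ?/id_rule ?/rot_rule ?/swap_rule ?/merge_rule;
  case_ifs; lia.

Lemma realized_id : realized id_rule.
Proof.
apply: realized_eq_in (realized_comp (realized_letter Lb) (realized_letter Lb)) _.
rule_arith.
Qed.

Lemma realized_rot k : 0 < k <= n - 3 -> realized (rot_rule k).
Proof.
elim: k => // k IHk k_lt; have [->|k_gt0] := posnP k.
  by apply: realized_eq_in (realized_letter La) _; rule_arith.
apply: realized_eq_in (realized_comp (IHk _) (realized_letter La)) _; first lia.
rule_arith.
Qed.

(* [(k k+1)] is [b] conjugated by a rotation. *)
Lemma realized_swap_next k : 0 < k <= n - 3 -> realized (swap_rule k k.+1).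
Proof.
move=> k_lt; have [k_lt2|k_ge2] := ltnP k 2.
  by apply: realized_eq_in (realized_letter Lb) _; rule_arith.
have rot1 := @realized_rot (n - 1 - k) ltac:(lia).
have rot2 := @realized_rot (k - 1) ltac:(lia).
apply: realized_eq_in (realized_comp (realized_comp rot1 (realized_letter Lb)) rot2) _.
rule_arith.
Qed.

Lemma realized_swap1 j : 1 < j <= n - 2 -> realized (swap_rule 1 j).
Proof.
elim: j => // j IHj j_lt; have [j_lt2|j_ge2] := ltnP j 2.
  by apply: realized_eq_in (realized_letter Lb) _; rule_arith.
have sw := @realized_swap_next j ltac:(lia).
apply: realized_eq_in (realized_comp (realized_comp sw (IHj _)) sw) _; first lia.
rule_arith.
Qed.

Lemma realized_swap i j : 0 < i <= n - 2 -> 0 < j <= n - 2 -> realized (swap_rule i j).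
Proof.
move=> i_lt j_lt; have [<-|ne_ij] := eqVneq i j.
  by apply: realized_eq_in realized_id _; rule_arith.
have [i1|ne_i1] := eqVneq i 1; first by rewrite i1; apply: realized_swap1; lia.
have sw1i := @realized_swap1 i ltac:(lia).
have [j1|ne_j1] := eqVneq j 1; first by apply: realized_eq_in sw1i _; rule_arith.
have sw1j := @realized_swap1 j ltac:(lia).
apply: realized_eq_in (realized_comp (realized_comp sw1i sw1j) sw1i) _.
rule_arith.
Qed.

Lemma realized_merge_last j : 0 < j <= n - 3 -> realized (merge_rule (n - 2) j).
Proof.
move=> j_lt; have c_rule : realized (merge_rule (n - 2) 1).
  by apply: realized_eq_in (realized_letter Lc) _; rule_arith.
have [->//|ne_j1] := eqVneq j 1.
have sw := @realized_swap 1 j ltac:(lia) ltac:(lia).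
apply: realized_eq_in (realized_comp (realized_comp sw c_rule) sw) _.
rule_arith.
Qed.

Lemma realized_merge i j :
  0 < i <= n - 2 -> 0 < j <= n - 2 -> i != j -> realized (merge_rule i j).
Proof.
move=> i_lt j_lt ne_ij; have [im|ne_im] := eqVneq i (n - 2).
  by rewrite im; apply: realized_merge_last; lia.
have sw := @realized_swap i (n - 2) ltac:(lia) ltac:(lia).
have [jm|ne_jm] := eqVneq j (n - 2).
  have mg := @realized_merge_last i ltac:(lia).
  by apply: realized_eq_in (realized_comp (realized_comp sw mg) sw) _; rule_arith.
have mg := @realized_merge_last j ltac:(lia).
apply: realized_eq_in (realized_comp (realized_comp sw mg) sw) _.
rule_arith.
Qed.

Lemma realized_kill i : 0 < i <= n - 2 -> realized (merge_rule i N).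
Proof.
move=> i_lt; have d_rule : realized (merge_rule 1 N).
  by apply: realized_eq_in (realized_letter Ld) _; rule_arith.
have sw := @realized_swap 1 i ltac:(lia) i_lt.
apply: realized_eq_in (realized_comp (realized_comp sw d_rule) sw) _.
rule_arith.
Qed.

Definition inners := iota 1 (n - 2).

Lemma mem_inners q : (q \in inners) = (0 < q < N).
Proof. rewrite mem_iota; lia. Qed.

Lemma swap_ruleK i j q : i != 0 -> j != 0 -> q != 0 ->
  swap_rule i j (swap_rule i j q) = q.
Proof. rewrite /swap_rule; case_ifs; lia. Qed.

(* [f \o swap_rule i j] has the extra fixed point [i] as soon as [f j = i]. *)
Lemma realized_onto f :
  f 0 = N -> f N = N -> (forall q, 0 < q < N -> 0 < f q < N) ->
  {subset inners <= map f inners} -> realized f.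
Proof.
have [m] := ubnP (count (fun q => f q != q) inners).
elim: m f => // m IHm f lt_count f0 fN f_in f_onto.
have [/hasP[i i_in fi_ne]|/hasPn fixed] := boolP (has (fun q => f q != q) inners).
  have /mapP[j j_in fj] := f_onto i i_in; move: i_in j_in; rewrite !mem_inners.
  move=> i_in j_in; have ne_ij : i != j by apply: contraNneq _ fi_ne => eq_ij; rewrite {2}fj eq_ij.
  have swK q : q != 0 -> swap_rule i j (swap_rule i j q) = q.
    by apply: swap_ruleK; lia.
  have sw_in q : 0 < q < N -> 0 < swap_rule i j q < N by rewrite /swap_rule; case_ifs; lia.
  set g := f \o swap_rule i j.
  have realized_g : realized g.
    apply: IHm => /=.
    - rewrite -ltnS (leq_trans _ lt_count) // ltnS.
      apply: (@count_lt_in _ _ _ _ i); rewrite ?mem_inners //=.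
        move=> y; rewrite mem_inners => y_in; apply: contraNN => /eqP fy.
        have ne_yi : y != i by apply: contraNneq _ fi_ne => <-; rewrite fy.
        have ne_yj : y != j by apply: contraNneq _ ne_ij => yj; rewrite fj -yj fy.
        rewrite /g /= /swap_rule (negbTE ne_yi) (negbTE ne_yj) ifF ?fy //; lia.
      by rewrite negbK /g /= /swap_rule eqxx ifF -?fj //; lia.
    - by rewrite /g /= /swap_rule eqxx fN.
    - by rewrite /g /= /swap_rule !ifF ?fN //; lia.
    - by move=> q q_in; apply/f_in/sw_in.
    - move=> v /f_onto /mapP[x x_in ->]; apply/mapP; exists (swap_rule i j x).
        by move: x_in; rewrite !mem_inners => /sw_in.
      by rewrite /g /= swK //; move: x_in; rewrite mem_inners; lia.
  have sw := @realized_swap i j ltac:(lia) ltac:(lia).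
  apply: realized_eq_in (realized_comp sw realized_g) _.
  move=> q lt_qn; rewrite /g /=; have [->|q_ne0] := eqVneq q 0; last by rewrite swK.
  by rewrite /swap_rule eqxx f0 !ifF ?fN //; lia.
apply: realized_eq_in realized_id _ => q lt_qn; rewrite /id_rule.
have [->//|q_ne0] := eqVneq q 0; have [->//|q_neN] := eqVneq q N.
by apply/esym/eqP; move: (fixed q); rewrite mem_inners negbK; apply; lia.
Qed.

(* A map of the inner states into themselves that misses some value [v] is not
   injective; merging a colliding pair frees a preimage [i] to be sent to [v]. *)
Lemma realized_into f :
  f 0 = N -> f N = N -> (forall q, 0 < q < N -> 0 < f q < N) -> realized f.
Proof.
have [m] := ubnP (count (fun v => v \notin map f inners) inners).
elim: m f => // m IHm f lt_count f0 fN f_in.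
have [/hasP[v v_in fv_out]|/hasPn onto] :=
  boolP (has (fun v => v \notin map f inners) inners); last first.
  by apply: realized_onto => // v /onto; rewrite negbK.
have map_f_in : {subset map f inners <= inners}.
  by move=> y /mapP[x]; rewrite mem_inners => /f_in fx ->; rewrite mem_inners.
have f_not_uniq : ~~ uniq (map f inners).
  apply: contra fv_out => f_uniq.
  have le_size : size inners <= size (map f inners) by rewrite size_map.
  by have [_ ->] := uniq_min_size f_uniq map_f_in le_size.
have [i [j [i_in j_in ne_ij fij]]] := not_uniq_map (iota_uniq 1 (n - 2)) f_not_uniq.
move: i_in j_in (v_in); rewrite !mem_inners => i_in j_in v_in'.
set g := fun q => if q == i then v else f q.
have realized_g : realized g.
  apply: IHm; rewrite /g.
  - rewrite -ltnS (leq_trans _ lt_count) // ltnS.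
    apply: (@count_lt_in _ _ _ _ v) => //; last first.
      by rewrite negbK; apply/mapP; exists i; rewrite ?mem_inners ?eqxx.
    move=> w _; apply: contraNN => /mapP[x x_in ->]; apply/mapP.
    have [xi|ne_xi] := eqVneq x i; last by exists x; rewrite ?(negbTE ne_xi).
    by exists j; rewrite ?mem_inners // xi fij eq_sym (negbTE ne_ij).
  - by rewrite ifF ?f0 //; lia.
  - by rewrite ifF ?fN //; lia.
  - by move=> q q_in; case: ifP => _; [lia | exact: f_in].
have mg := @realized_merge i j ltac:(lia) ltac:(lia) ne_ij.
apply: realized_eq_in (realized_comp mg realized_g) _ => q _; rewrite /g /= /merge_rule.
have [->|q_ne0] := eqVneq q 0; first by rewrite ifF ?f0 //; lia.
have [->|ne_qi] := eqVneq q i; last by rewrite (negbTE ne_qi).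
by rewrite eq_sym (negbTE ne_ij) fij.
Qed.

Definition typeA f := [/\ f 0 = N, f N = N & forall q, 0 < q < N -> 0 < f q < n].

(* An inner state [i] with [f i = N] is first sent to [N] by a kill; afterwards
   its image is irrelevant. *)
Lemma realized_typeA f : typeA f -> realized f.
Proof.
have [m] := ubnP (count (fun q => f q == N) inners).
elim: m f => // m IHm f lt_count [f0 fN f_in].
have [/hasP[i i_in /eqP fi]|/hasPn alive] := boolP (has (fun q => f q == N) inners).
  move: (i_in); rewrite mem_inners => i_in'.
  set g := fun q => if q == i then 1 else f q.
  have realized_g : realized g.
    apply: IHm; rewrite /g; last split.
    - rewrite -ltnS (leq_trans _ lt_count) // ltnS.
      apply: (@count_lt_in _ _ _ _ i); rewrite ?eqxx ?fi //; last lia.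
      by move=> y _; case: ifP => // _; lia.
    - by rewrite ifF ?f0 //; lia.
    - by rewrite ifF ?fN //; lia.
    - by move=> q q_in; case: ifP => _; [lia | exact: f_in].
  have kill := @realized_kill i ltac:(lia).
  apply: realized_eq_in (realized_comp kill realized_g) _ => q _.
  rewrite /g /= /merge_rule; have [->|q_ne0] := eqVneq q 0; first by rewrite ifF ?f0 //; lia.
  have [->|ne_qi] := eqVneq q i; last by rewrite (negbTE ne_qi).
  by rewrite ifF ?fN ?fi //; lia.
apply: realized_into => // q q_in; have := alive q; rewrite mem_inners => /(_ q_in).
by have := f_in q q_in; lia.
Qed.

Definition typeB f := 0 < f 0 < N /\ forall q, 0 < q < n -> f q = N.

Lemma realized_typeB f : typeB f -> realized f.
Proof.
move=> [f0 f_out]; have sw := @realized_swap 1 (f 0) ltac:(lia) ltac:(lia).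
apply: realized_eq_in (realized_comp (realized_letter Le) sw) _ => q lt_qn.
rewrite /= /swap_rule; have [->|q_ne0] := eqVneq q 0; first by rewrite eqxx.
have -> : f q = N by apply: f_out; lia.
by case_ifs; lia.
Qed.

Definition Wsf_rule f := typeA f \/ typeB f.

Lemma typeA_pos f q : typeA f -> 0 < q < n -> 0 < f q < n.
Proof.
case=> f0 fN f_in q_in; have [->|q_neN] := eqVneq q N; first by rewrite fN; lia.
by apply: f_in; lia.
Qed.

Lemma Wsf_rule_eq_in f g :
  Wsf_rule f -> (forall q, q < n -> f q = g q) -> Wsf_rule g.
Proof.
move=> [[f0 fN f_in]|[f0 f_out]] Efg; [left; split | right; split].
- by rewrite -Efg //; lia.
- by rewrite -Efg //; lia.
- by move=> q q_in; rewrite -Efg ?f_in //; lia.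
- by rewrite -Efg //; lia.
- by move=> q q_in; rewrite -Efg ?f_out //; lia.
Qed.

Lemma Wsf_rule_comp f g : Wsf_rule f -> Wsf_rule g -> Wsf_rule (g \o f).
Proof.
have N_pos : 0 < N < n by lia.
move=> [fA|[f0 f_out]] [gA|[g0 g_out]]; rewrite /Wsf_rule /typeA /typeB /=.
- have [f0 fN f_in] := fA; have [_ gN _] := gA.
  by left; split; rewrite ?f0 ?fN // => q /f_in /(typeA_pos gA).
- have [f0 fN f_in] := fA.
  by left; split; rewrite ?f0 ?fN ?g_out // => q /f_in q_in; rewrite g_out; lia.
- have [_ gN _] := gA.
  have [gf0|gf0] := eqVneq (g (f 0)) N.
    left; split=> // [|q q_in]; rewrite /= f_out //; lia.
  right; split; last by move=> q q_in; rewrite f_out.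
  by have := typeA_pos gA (_ : 0 < f 0 < n); lia.
- have fN : f N = N by apply: f_out.
  left; split=> [||q q_in]; first by rewrite g_out; lia.
    by rewrite fN g_out.
  by rewrite f_out ?g_out; lia.
Qed.

Lemma Wsf_rule_letter x : Wsf_rule (letter_rule x).
Proof.
by case: x; [left.. | right]; repeat split; rewrite /=; try move=> q q_in; case_ifs; lia.
Qed.

Lemma realizedP f : realized f <-> Wsf_rule f.
Proof.
split; last by case=> [/realized_typeA | /realized_typeB].
move=> [w []]; elim: w f => // x w IHw f _ Ew.
have Ef k : k < n -> val (dstar (@W_delta n) (W_delta (ordn k) x) w) = f k.
  by move=> lt_kn; rewrite -[in RHS](val_ordn lt_kn) -Ew.
clear Ew; case: w IHw Ef => [_|y w IHw] Ef.
  apply: Wsf_rule_eq_in (Wsf_rule_letter x) _ => k lt_kn.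
  by rewrite -Ef //= val_W_delta val_ordn.
pose g k := val (dstar (@W_delta n) (ordn k) (y :: w)).
have g_rule : Wsf_rule g by apply: IHw => // q; rewrite /g ordn_val.
apply: Wsf_rule_eq_in (Wsf_rule_comp (Wsf_rule_letter x) g_rule) _ => k lt_kn.
by rewrite -Ef // /= /g -[k in letter_rule x k](val_ordn lt_kn) -val_W_delta ordn_val.
Qed.

Definition ffun_rule (t : {ffun 'I_n -> 'I_n}) k := val (t (ordn k)).

Lemma ffun_ruleE t (q : 'I_n) : ffun_rule t q = val (t q).
Proof. by rewrite /ffun_rule ordn_val. Qed.

Lemma in_trans_semigroupE t :
  in_trans_semigroup (@W_delta n) t <-> realized (ffun_rule t).
Proof.
split=> -[w [w_ne Ew]]; exists w; split=> // q; first by rewrite ffun_ruleE Ew.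
by apply: val_inj; rewrite Ew ffun_ruleE.
Qed.

Lemma ordn0 (q0 : 'I_n) : val q0 = 0 -> ordn 0 = q0.
Proof. by move=> q00; apply: val_inj; rewrite val_ordn ?q00. Qed.

Lemma Wsf_typeA (t : {ffun 'I_n -> 'I_n}) :
  (forall q : 'I_n, val q = 0 -> val (t q) = N) ->
  (forall q : 'I_n, val q = N -> val (t q) = N) ->
  (forall q : 'I_n, 1 <= val q <= n - 2 -> val (t q) <> 0) -> Wsf t.
Proof.
move=> t0 tN t_in; split; last by left.
split=> [q|]; last split=> // j j_ge1 p /t0 tp.
  have [/t0 ->|q_ne0] := eqVneq (val q) 0; first lia.
  have [/tN ->|q_neN] := eqVneq (val q) N; first lia.
  by apply: t_in; have := ltn_ord q; simpl in *; lia.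
by left; apply: (iter_closed (P := fun y : 'I_n => val y = N) (i := 1)) => // y /tN.
Qed.

Lemma Wsf_typeB (t : {ffun 'I_n -> 'I_n}) :
  (forall q : 'I_n, val q = 0 -> 1 <= val (t q) <= n - 2) ->
  (forall q : 'I_n, val q <> 0 -> val (t q) = N) -> Wsf t.
Proof.
move=> t0 t_out; split; last by right=> q q_in; apply: t_out; lia.
split=> [q|]; first by have [/t0|/eqP/t_out ->] := eqVneq (val q) 0; lia.
split=> [q qN|j j_ge1 p /t0 tp]; first by apply: t_out; rewrite qN; lia.
have [->|j_ne1] := eqVneq j 1.
  right=> q q_in /(congr1 val) /=.
  have -> : val (t q) = N by apply: t_out; lia.
  by simpl in *; lia.
left; apply: (iter_closed (P := fun y : 'I_n => val y = N) (i := 2)) => [y yN||].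
- by apply: t_out; rewrite yN; lia.
- by rewrite /= t_out; lia.
- lia.
Qed.

Lemma WsfE t : Wsf t <-> Wsf_rule (ffun_rule t).
Proof.
split=> [[[t_ne0 [tN _]] t_cases]|[[t0 tN t_in]|[t0 t_out]]]; last first.
- apply: Wsf_typeB => q; first by move/ordn0 <-; move: t0; rewrite /ffun_rule; lia.
  by rewrite -ffun_ruleE => q_ne0; apply: t_out; have := ltn_ord q; simpl in *; lia.
- apply: Wsf_typeA => q; first by move/ordn0 <-.
    by rewrite -ffun_ruleE => ->.
  rewrite -ffun_ruleE => q_in; have /t_in/andP[pos _] : 0 < val q < N by lia.
  by apply/eqP; rewrite -lt0n.
have tN' : ffun_rule t N = N by apply: tN; rewrite val_ordn //; lia.
have t_pos k : 0 < ffun_rule t k < n by rewrite ltn_ord andbT lt0n; apply/eqP/t_ne0.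
have [t0|t0] := eqVneq (ffun_rule t 0) N; first by left; split=> // q _; apply: t_pos.
right; split=> [|q q_in]; first by have := t_pos 0; lia.
have [->//|q_neN] := eqVneq q N.
case: t_cases => [t0N|t_out]; first by case/eqP: t0; apply: t0N; rewrite val_ordn.
by apply: t_out; rewrite val_ordn; lia.
Qed.

Lemma trans_semigroupE t : in_trans_semigroup (@W_delta n) t <-> Wsf t.
Proof. by rewrite in_trans_semigroupE realizedP WsfE. Qed.

Lemma count_iota0 (P : pred nat) : count P (iota 0 n) = P 0 + count P inners + P N.
Proof.
have {1}-> : n = 1 + (n - 2) + 1 by lia.
rewrite !iotaD !count_cat /= !addn0 addnA.
by have -> : 1 + (n - 2) = N by lia.
Qed.

Lemma count_inners_all (P : pred nat) :
  (forall q, 0 < q < N -> P q) -> count P inners = n - 2.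
Proof.
move=> P_in; rewrite -[n - 2](size_iota 1); apply/eqP; rewrite -all_count.
by apply/allP => q; rewrite mem_inners => /P_in.
Qed.

Lemma count_inners_none (P : pred nat) :
  (forall q, 0 < q < N -> ~~ P q) -> count P inners = 0.
Proof.
move=> noneP; apply/eqP; rewrite eqn0Ngt -has_count; apply/hasPn => q.
by rewrite mem_inners => /noneP.
Qed.

Definition familyA (q : 'I_n) : pred 'I_n :=
  if (val q == 0) || (val q == N) then [pred y | val y == N] else [pred y | val y != 0].

Definition familyB (q : 'I_n) : pred 'I_n :=
  if val q == 0 then [pred y | 0 < val y < N] else [pred y | val y == N].

Lemma familyAE t : t \in family familyA <-> typeA (ffun_rule t).
Proof.
split=> [/familyP t_in|[t0 tN t_in]].
  split; rewrite /ffun_rule.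
  - by have := t_in (ordn 0); rewrite /familyA val_ordn //= inE => /eqP.
  - by have := t_in (ordn N); rewrite /familyA val_ordn ?eqxx ?orbT ?inE => [/eqP//|]; lia.
  - move=> q q_in; have := t_in (ordn q); rewrite /familyA val_ordn; last lia.
    by rewrite ifF ?inE ?ltn_ord ?andbT ?lt0n //; lia.
apply/familyP => q; rewrite /familyA.
have [q0|q_ne0] /= := eqVneq (val q) 0; first by rewrite inE -ffun_ruleE q0 t0.
have [qN|q_neN] /= := eqVneq (val q) N; first by rewrite inE -ffun_ruleE qN tN.
have q_in : 0 < val q < N by have := ltn_ord q; simpl in *; lia.
by rewrite inE -ffun_ruleE -lt0n; case/andP: (t_in q q_in).
Qed.

Lemma familyBE t : t \in family familyB <-> typeB (ffun_rule t).
Proof.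
split=> [/familyP t_in|[t0 t_out]].
  split; rewrite /ffun_rule.
    by have := t_in (ordn 0); rewrite /familyB val_ordn //= inE.
  move=> q q_in; have := t_in (ordn q); rewrite /familyB val_ordn; last lia.
  by rewrite ifF ?inE => [/eqP//|]; lia.
apply/familyP => q; rewrite /familyB.
have [q0|q_ne0] /= := eqVneq (val q) 0; first by rewrite inE -ffun_ruleE q0.
have q_in : 0 < val q < n by have := ltn_ord q; simpl in *; lia.
by rewrite inE -ffun_ruleE t_out.
Qed.

Lemma card_familyA :
  #|(family familyA : simpl_pred {ffun 'I_n -> 'I_n})| = (n - 1) ^ (n - 2).
Proof.
rewrite card_family foldrE big_image /=.
rewrite (eq_bigr (fun q : 'I_n => if 0 < val q < N then n - 1 else 1)) => [|q _].
  rewrite -big_mkcond prod_nat_const (card_ord_val (P := fun k => 0 < k < N)) //.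
  by rewrite count_iota0 count_inners_all //= ltnn andbF addn0.
have lt_qn := ltn_ord q; rewrite /familyA.
case: ifP => [q_out|q_in]; [rewrite ifF | rewrite ifT]; simpl in *; try lia.
  rewrite (card_ord_val (P := fun k => k == N)) // count_iota0.
  by rewrite count_inners_none => [|k]; lia.
rewrite (card_ord_val (P := fun k => k != 0)) // count_iota0.
by rewrite count_inners_all => [|k]; lia.
Qed.

Lemma card_familyB : #|(family familyB : simpl_pred {ffun 'I_n -> 'I_n})| = n - 2.
Proof.
rewrite card_family foldrE big_image /=.
rewrite (eq_bigr (fun q : 'I_n => if val q == 0 then n - 2 else 1)) => [|q _].
  rewrite -big_mkcond prod_nat_const (card_ord_val (P := fun k => k == 0)) //.
  have N_ne0 : (N == 0) = false by apply/eqP; lia.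
  by rewrite count_iota0 count_inners_none //= ?N_ne0 ?expn1 => [|k]; lia.
have lt_qn := ltn_ord q; rewrite /familyB; case: ifP => _.
  rewrite (card_ord_val (P := fun k => 0 < k < N)) // count_iota0.
  by rewrite count_inners_all => [|k]; rewrite /= ?ltnn ?andbF; lia.
rewrite (card_ord_val (P := fun k => k == N)) // count_iota0.
by rewrite count_inners_none => [|k]; lia.
Qed.

Lemma Wsf_enum : exists s : seq {ffun 'I_n -> 'I_n},
  [/\ uniq s, forall t, t \in s <-> Wsf t & size s = (n - 1) ^ (n - 2) + (n - 2)].
Proof.
pose A := (family familyA : simpl_pred {ffun 'I_n -> 'I_n}).
pose B := (family familyB : simpl_pred {ffun 'I_n -> 'I_n}).
have AB_disjoint : #|[predI A & B]| = 0.
  apply: eq_card0 => t; rewrite !inE; apply/negP => /andP[/familyAE[t0 _ _] /familyBE[]].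
  by rewrite t0; lia.
exists (enum [predU A & B]); split; first exact: enum_uniq.
  move=> t; rewrite mem_enum inE WsfE /Wsf_rule -familyAE -familyBE.
  by split=> [/orP|[]->]; rewrite ?orbT.
by rewrite -cardE -card_familyA -card_familyB -cardUI AB_disjoint addn0.
Qed.

Lemma reachable (q0 q : 'I_n) : val q0 = 0 -> exists w, dstar (@W_delta n) q0 w = q.
Proof.
move=> q00; have [q_0|q_ne0] := eqVneq (val q) 0.
  by exists [::]; apply: val_inj; rewrite q00 q_0.
have lt_qn := ltn_ord q.
have /realizedP[w [_ Ew]] : Wsf_rule (fun k => if k == 0 then val q else N).
  have [qN|q_neN] := eqVneq (val q) N; [left | right]; split=> // [|k k_in].
  - by rewrite ifF //; lia.
  - by rewrite ifF //; lia.
  - by simpl in *; lia.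
  - by rewrite ifF //; lia.
by exists w; apply: val_inj; rewrite Ew q00.
Qed.

Lemma separating_word (p : 'I_n) :
  val p != N -> exists v, forall x : 'I_n, W_final (dstar (@W_delta n) x v) = (x == p).
Proof.
move=> p_neN; have lt_pn := ltn_ord p.
have /realizedP[v [_ Ev]] : Wsf_rule (fun k => if k == val p then 1 else N).
  have [p0|p_ne0] := eqVneq (val p) 0; [right | left].
    by split=> [|k k_in]; rewrite p0 //=; [lia | rewrite ifF //; lia].
  by split=> [||k k_in] /=; simpl in *; case: ifP; lia.
exists v => x; rewrite /W_final Ev -val_eqE.
by have [//|_] := eqVneq (val x) (val p); apply/eqP; lia.
Qed.

Lemma W_minimal (q0 : 'I_n) : val q0 = 0 -> minimal_dfa (@W_delta n) q0 (@W_final n).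
Proof.
move=> q00 Q' delta' q0' F' same_lang.
have [word Eword] := fin_all_exists (fun q => reachable q q00).
pose phi q := dstar delta' q0' (word q).
suff phi_inj : injective phi by apply: leq_card phi_inj.
move=> q1 q2 eq_phi; apply/eqP; apply: contraT => ne_q12.
wlog q1N : q1 q2 eq_phi ne_q12 / val q1 != N => [wlog_q1|].
  have [q1N|q1_neN] := eqVneq (val q1) N; last exact: wlog_q1 eq_phi ne_q12 q1_neN.
  apply: (wlog_q1 q2 q1 (esym eq_phi)); first by rewrite eq_sym.
  by apply: contraNneq _ ne_q12 => q2N; apply/eqP/val_inj; rewrite q1N q2N.
have [v Ev] := separating_word q1N.
have := same_lang (word q1 ++ v); have := same_lang (word q2 ++ v).
rewrite /accepts !dstar_cat !Eword -/(phi q1) -/(phi q2) eq_phi !Ev eqxx => ->.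
by rewrite eq_sym (negbTE ne_q12).
Qed.

Lemma word_Wsf_rule w :
  w <> [::] -> Wsf_rule (fun k => val (dstar (@W_delta n) (ordn k) w)).
Proof. by move=> w_ne; apply/realizedP; exists w; split=> // q; rewrite ordn_val. Qed.

Lemma W_suffix_free (q0 : 'I_n) :
  val q0 = 0 -> suffix_free (accepts (@W_delta n) q0 (@W_final n)).
Proof.
move=> q00 w u acc_w acc_u /suffixP[[|x p] def_w]; first by rewrite def_w.
move: acc_w acc_u; rewrite def_w /accepts dstar_cat /W_final.
set s := dstar _ q0 (x :: p) => acc_w acc_u.
have s_pos : 0 < val s < n.
  case: (@word_Wsf_rule (x :: p)) => // [[s0 _ _]|[s0 _]]; move: s0;
    rewrite /s /= (ordn0 q00); lia.
have u_ne : u <> [::] by move=> u_nil; move: acc_u; rewrite u_nil /= q00.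
case: (word_Wsf_rule u_ne) => [[u0 _ _]|[_ u_out]].
  by move: u0 acc_u; rewrite /= (ordn0 q00) => ->; lia.
by move: acc_w; rewrite -(ordn_val s) u_out //; lia.
Qed.

End TransitionSemigroup.

Theorem proposition2 (n : nat) (Hn : 4 <= n) (q0 : 'I_n) (Hq0 : val q0 = 0) :
  minimal_dfa (@W_delta n) q0 (@W_final n)
  /\ suffix_free (accepts (@W_delta n) q0 (@W_final n))
  /\ (forall t : {ffun 'I_n -> 'I_n},
        in_trans_semigroup (@W_delta n) t <-> Wsf t)
  /\ (exists s : seq {ffun 'I_n -> 'I_n},
        [/\ uniq s, (forall t, t \in s <-> Wsf t)
          & size s = (n - 1) ^ (n - 2) + (n - 2)])
  /\ (forall t : {ffun 'I_n -> 'I_n},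
        (forall q : 'I_n, val q = 0 -> val (t q) = n.-1) ->
        (forall q : 'I_n, val q = n.-1 -> val (t q) = n.-1) ->
        (forall q : 'I_n, 1 <= val q <= n - 2 -> val (t q) <> 0) ->
        Wsf t)
  /\ (forall t : {ffun 'I_n -> 'I_n},
        (forall q : 'I_n, val q = 0 -> 1 <= val (t q) <= n - 2) ->
        (forall q : 'I_n, val q <> 0 -> val (t q) = n.-1) ->
        Wsf t).
Proof.
split; first exact: W_minimal.
split; first exact: W_suffix_free.
split; first exact: trans_semigroupE.
split; first exact: Wsf_enum.
by split; [exact: Wsf_typeA | exact: Wsf_typeB].
Qed.
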